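(* Let $S$ be a finite semigroup. Every element of $S$ has a square root in $S$ if and only if every element of $S$ belongs to a maximal subgroup of $S$ of odd order.
   Context: A square root of $x\in S$ is an element $y\in S$ with $y^2=x$. A maximal subgroup of $S$ is a subgroup maximal under inclusion, equivalently the $\mathcal H$-class of an idempotent. *)

From mathcomp Require Import all_boot.
Set Implicit Arguments. Unset Strict Implicit. Unset Printing Implicit Defensive.

Definition is_subgroup (T : finType) (op : T -> T -> T) (G : {set T}) : Prop :=
  exists2 e, e \in G &
    [/\ (forall g, g \in G -> op e g = g /\ op g e = g),
        (forall g h, g \in G -> h \in G -> op g h \in G) &
        (forall g, g \in G -> exists2 h, h \in G & op g h = e /\ op h g = e)].

Definition maximal_subgroup (T : finType) (op : T -> T -> T) (G : {set T}) : Prop :=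
  is_subgroup op G /\
  (forall H : {set T}, is_subgroup op H -> G \subset H -> H = G).

Definition has_sqrt (T : finType) (op : T -> T -> T) (x : T) : Prop :=
  exists y, op y y = x.

From Stdlib Require Import Classical.
From mathcomp Require Import all_boot zify.

Set Implicit Arguments. Unset Strict Implicit. Unset Printing Implicit Defensive.

(* A finite group G has odd order iff it has no involution: a fixed-point-free
   involution splits a set into pairs, and both g |-> g^-1 on G minus the
   identity and g |-> g t for an involution t are of this kind.
   If every element of S is a square, squaring is a bijection of S, so some
   iterate of it fixes x, i.e. x = x^(2^m) with m > 0.  The powers of x then
   form a group, contained in a maximal subgroup, which has no involution t
   because t t = e e forces t = e.  Conversely, if x lies in a group of odd
   order and x^k = e with k minimal, then k is odd (otherwise x^(k/2) is an
   involution) and x = (x^((k+1)/2))^2. *)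

Lemma involution_card_even (T : finType) (f : T -> T) (A : {set T}) :
  (forall a, a \in A -> [/\ f a \in A, f (f a) = a & f a != a]) ->
  ~~ odd #|A|.
Proof.
have [n] := ubnP #|A|; elim: n A => // n IH A ltAn fA.
have [->|[a aA]] := set_0Vmem A; first by rewrite cards0.
have [faA ffa nfa] := fA a aA.
set B := A :\ a :\ f a.
have cardA : #|A| = #|B|.+2.
  by rewrite (cardsD1 a) aA (cardsD1 (f a)) !inE nfa faA.
rewrite cardA /= negbK; apply: IH => [|b]; first by lia.
rewrite /B !inE => /and3P[bfa ba bA]; have [fbA ffb nfb] := fA b bA.
rewrite fbA ffb nfb andbT; split=> //; apply/andP; split.
- by apply: contraNneq ba => /(congr1 f); rewrite ffb ffa => ->.
- by apply: contraNneq bfa => <-; rewrite ffb.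
Qed.

Section Semigroup.

Variables (T : finType) (op : T -> T -> T).
Hypothesis opA : forall x y z, op x (op y z) = op (op x y) z.

(* [spow x n] is the power x^(n+1): the semigroup has no identity to start from. *)
Definition spow (x : T) (n : nat) : T := iter n (op x) x.

Lemma spowD x a b : op (spow x a) (spow x b) = spow x (a + b).+1.
Proof. by elim: a => //= a IHa; rewrite -opA IHa. Qed.

Lemma spow_collision x : exists a b, a < b /\ spow x a = spow x b.
Proof.
have: ~~ injectiveb (fun i : 'I_#|T|.+1 => spow x i).
  by apply: contraL (leqnn #|T|.+1) => /injectiveP/leq_card; rewrite card_ord ltnn.
case/injectivePn=> i [j neq_ij eq_ij].
case: (ltngtP i j) neq_ij => [ltij | ltji | /val_inj-> //]; last by rewrite eqxx.
- by exists i, j.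
- by exists j, i.
Qed.

Section Cycle.

Variables (x : T) (n : nat).
Hypotheses (n_gt0 : 0 < n) (xn : spow x n = x).

Lemma spow_addn a : spow x (a + n) = spow x a.
Proof. by elim: a => [|a IHa]; rewrite ?add0n //= IHa. Qed.

Lemma spow_mod a : spow x a = spow x (a %% n).
Proof.
rewrite {1}(divn_eq a n) addnC; elim: (a %/ n) => [|q IHq]; first by rewrite addn0.
by rewrite mulSn addnCA addnC spow_addn.
Qed.

Definition cycle_set : {set T} := [set spow x (val i) | i : 'I_n].

Lemma mem_cycle_set a : spow x a \in cycle_set.
Proof. by rewrite spow_mod; apply/imsetP; exists (Ordinal (ltn_pmod a n_gt0)). Qed.

Lemma cycle_subgroup : is_subgroup op cycle_set.
Proof.
exists (spow x n.-1); first exact: mem_cycle_set.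
split=> [y /imsetP[i _ ->] | y z /imsetP[i _ ->] /imsetP[j _ ->] |
         y /imsetP[i _ ->]]; rewrite ?spowD ?mem_cycle_set //.
- have -> : (n.-1 + i).+1 = i + n by lia.
  have -> : (i + n.-1).+1 = i + n by lia.
  by rewrite spow_addn.
- exists (spow x (n.-1 + n.-1 - i)); rewrite ?mem_cycle_set // !spowD.
  have -> : (i + (n.-1 + n.-1 - i)).+1 = n.-1 + n by have := ltn_ord i; lia.
  have -> : (n.-1 + n.-1 - i + i).+1 = n.-1 + n by have := ltn_ord i; lia.
  by rewrite spow_addn.
Qed.

End Cycle.

Lemma subgroup_sub_maximal (H : {set T}) :
  is_subgroup op H -> exists2 G, maximal_subgroup op G & H \subset G.
Proof.
have [n] := ubnP #|~: H|; elim: n H => // n IH H ltHn subH.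
have [[K subK ltHK] | noK] :=
  classic (exists2 K, is_subgroup op K & H \proper K).
- have ltKn : #|~: K| < n.
    by rewrite -properC in ltHK; have := proper_card ltHK; lia.
  have [G maxG sKG] := IH K ltKn subK.
  by exists G => //; apply: subset_trans sKG; apply: proper_sub.
- exists H => //; split=> // K subK sHK.
  apply/eqP; rewrite eqEsubset sHK andbT; apply/negPn/negP => nsKH.
  by apply: noK; exists K => //; rewrite properE sHK.
Qed.

Lemma sqr_injective :
  (forall x, has_sqrt op x) -> injective (fun y => op y y).
Proof.
move=> sqrt_all; suff /image_injP inj_sq : #|codom (fun y => op y y)| == #|T|.
  by move=> y z; apply: inj_sq.
apply/eqP/eq_card => x; have [y <-] := sqrt_all x; exact: codom_f.
Qed.

Lemma sqr_injective_spow_period x :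
  injective (fun y => op y y) -> exists2 n, 0 < n & spow x n = x.
Proof.
set sq := fun y => op y y => inj_sq.
have iter_sq m : iter m sq x = spow x (2 ^ m).-1.
  elim: m => //= m ->; rewrite /sq spowD expnS.
  by congr spow; have := expn_gt0 2 m; lia.
exists (2 ^ order sq x).-1; last by rewrite -iter_sq iter_order.
have := order_gt0 sq x; case: (order sq x) => // o _.
by rewrite expnS; have := expn_gt0 2 o; lia.
Qed.

Section Subgroup.

Variables (G : {set T}) (e : T).
Hypotheses (eG : e \in G)
  (idG : forall g, g \in G -> op e g = g /\ op g e = g)
  (mulG : forall g h, g \in G -> h \in G -> op g h \in G)
  (invG : forall g, g \in G -> exists2 h, h \in G & op g h = e /\ op h g = e).

Lemma subgroup_lcancel g h k :
  g \in G -> h \in G -> k \in G -> op g h = op g k -> h = k.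
Proof.
move=> gG hG kG eq_gh_gk; have [g' g'G [_ g'g]] := invG gG.
by case: (idG hG) (idG kG) => [<- _] [<- _]; rewrite -g'g -!opA eq_gh_gk.
Qed.

Lemma subgroup_card_even t : t \in G -> t != e -> op t t = e -> ~~ odd #|G|.
Proof.
move=> tG nte tt; apply: (@involution_card_even _ (fun g => op g t)) => g gG.
have [_ ge] := idG gG; split; [exact: mulG | by rewrite -opA tt ge |].
by apply: contraNneq nte => gtg; apply/eqP/(subgroup_lcancel gG tG eG); rewrite gtg ge.
Qed.

Lemma subgroup_card_odd : (forall t, t \in G -> op t t = e -> t = e) -> odd #|G|.
Proof.
move=> no_involution.
pose inv g := odflt g [pick h in G | (op g h == e) && (op h g == e)].
have invP g : g \in G -> [/\ inv g \in G, op g (inv g) = e & op (inv g) g = e].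
  move=> gG; rewrite /inv; case: pickP => [h /and3P[hG /eqP gh /eqP hg] | no_h] //=.
  by have [h hG [gh hg]] := invG gG; have := no_h h; rewrite hG gh hg !eqxx.
rewrite (cardsD1 e) eG /=; apply: (@involution_card_even _ inv) => g.
rewrite !inE => /andP[nge gG]; have [invgG g_invg invg_g] := invP g gG.
have [invinvgG invg_invinvg _] := invP (inv g) invgG.
split.
- rewrite invgG andbT; apply: contraNneq nge => invge.
  by have [_ <-] := idG gG; rewrite -{1}invge g_invg.
- by apply: (subgroup_lcancel invgG); rewrite ?invg_invinvg ?invg_g.
- by apply: contraNneq nge => invgg; apply/eqP/no_involution => //; rewrite -{2}invgg.
Qed.

Lemma spow_subgroup x a : x \in G -> spow x a \in G.
Proof. by move=> xG; elim: a => //= a; apply: mulG. Qed.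

Lemma subgroup_spow_period x : x \in G -> exists c, spow x c = e.
Proof.
move=> xG; have [a [b [ltab eq_ab]]] := spow_collision x; exists (b - a).-1.
apply: (subgroup_lcancel (spow_subgroup a xG)); rewrite ?spow_subgroup //.
have [_ ->] := idG (spow_subgroup a xG).
by rewrite spowD eq_ab; congr spow; lia.
Qed.

Lemma odd_subgroup_sqrt x : odd #|G| -> x \in G -> has_sqrt op x.
Proof.
move=> oddG xG; have [c0 xc0] := subgroup_spow_period xG.
have ex_c : exists c, spow x c == e by exists c0; apply/eqP.
have [c /eqP xc c_min] := ex_minnP ex_c.
have halfK := odd_double_half c; rewrite -addnn in halfK.
case/boolP: (odd c) halfK => [odd_c | even_c] /= halfK.
- have half_ne : spow x c./2 != e.
    by apply: contraTneq (leqnn c./2) => /eqP/c_min; lia.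
  suff: ~~ odd #|G| by rewrite oddG.
  apply: (subgroup_card_even (spow_subgroup _ xG) half_ne).
  by rewrite spowD -xc; congr spow; lia.
- exists (spow x c./2); rewrite spowD; have -> : (c./2 + c./2).+1 = c.+1 by lia.
  by rewrite /= xc; have [] := idG xG.
Qed.

End Subgroup.

Lemma sqr_injective_subgroup_odd (G : {set T}) :
  injective (fun y => op y y) -> is_subgroup op G -> odd #|G|.
Proof.
move=> inj_sq [e eG [idG _ invG]]; apply: (subgroup_card_odd eG idG invG).
by move=> t _ tt; apply: inj_sq; rewrite /= tt; case: (idG e eG).
Qed.

End Semigroup.

Theorem corollary4p10 (T : finType) (op : T -> T -> T)
  (opA : forall x y z, op x (op y z) = op (op x y) z) :
  (forall x : T, has_sqrt op x) <->
  (forall x : T, exists G : {set T},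
      [/\ maximal_subgroup op G, x \in G & odd #|G|]).
Proof.
split=> [sqrt_all x | odd_maximal x].
- have inj_sq := sqr_injective sqrt_all.
  have [n n_gt0 xn] := sqr_injective_spow_period opA x inj_sq.
  have [G maxG sCG] := subgroup_sub_maximal (cycle_subgroup opA n_gt0 xn).
  exists G; split=> //; first exact: (subsetP sCG) (mem_cycle_set n_gt0 xn 0).
  exact: (sqr_injective_subgroup_odd opA inj_sq maxG.1).
- have [G [[[e eG [idG mulG invG]] _] xG oddG]] := odd_maximal x.
  exact: (odd_subgroup_sqrt opA eG idG mulG invG oddG xG).
Qed.
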